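(* Let $f,g:\mathbb{R}^n\to[0,+\infty)$ and $h_1,h_2:\mathbb{R}^n\to\mathbb{R}$, let $C\subseteq\mathbb{R}^n$ be closed and convex, $\Omega:=\{x:g(x)\neq0\}$, $C\cap\Omega\neq\emptyset$, and assume: $f$ is convex; $g$ is differentiable with locally Lipschitz gradient; $h_1$ is differentiable with locally Lipschitz gradient; $h_2$ is convex. Let $F$, $H$ and Algorithm 1 be as in the context, with $x^0\in\mathrm{dom}F$, and assume $\mathcal{X}_0:=\{x\in\mathrm{dom}F:F(x)\le F(x^0)\}$ is compact. Let $\{(x^k,z^k,c_k):k\in\mathbb{N}\}$ be generated by Algorithm 1. Then: (i) $\{(x^k,z^k,c_k):k\in\mathbb{N}\}$ is bounded; (ii) $\lim_{k\to\infty}F(x^k)$ exists; (iii) $\lim_{k\to\infty}\|x^{k+1}-x^k\|_2=0$.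
   Context: $F(x)=f^2(x)/g(x)+h_1(x)-h_2(x)$ if $x\in\Omega\cap C$, $F(x)=+\infty$ otherwise. $\iota_C$ is the indicator of $C$, $h_2^\star$ the convex conjugate of $h_2$, $\partial h_2$ the convex subdifferential, $\mathrm{prox}_\varphi(y)=\arg\min_x\{\varphi(x)+\frac12\|x-y\|_2^2\}$. $H(x,z,c)=2cf(x)+\iota_C(x)-c^2g(x)+h_1(x)+h_2^\star(z)-\langle x,z\rangle$. Algorithm 1: given $x^0\in\mathrm{dom}F$, $0<\underline{\alpha}<\overline{\alpha}$, $\sigma>0$, $0<r<1$, for $k=0,1,2,\dots$: (Step 1) compute $c_k=f(x^k)/g(x^k)$, choose $z^k\in\partial h_2(x^k)$, set $\alpha:=\widetilde{\alpha}_k\in[\underline{\alpha},\overline{\alpha}]$; (Step 2) compute $\widehat{x}^k\in\mathrm{prox}_{2\alpha c_kf+\iota_C}\big(x^k-\alpha(\nabla h_1(x^k)-c_k^2\nabla g(x^k)-z^k)\big)$; if $\widehat{x}^k\in\Omega$ and $H(\widehat{x}^k,z^k,f(\widehat{x}^k)/g(\widehat{x}^k))+\frac{\sigma}{2}\|\widehat{x}^k-x^k\|_2^2\le F(x^k)$, set $x^{k+1}=\widehat{x}^k$, $\alpha_k:=\alpha$ and go to the next $k$; otherwise set $\alpha:=r\alpha$ and repeat Step 2. *)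

From HB Require Import structures.
From mathcomp Require Import all_boot all_order all_algebra.
From mathcomp Require Import all_classical all_reals all_analysis.
Set Implicit Arguments. Unset Strict Implicit. Unset Printing Implicit Defensive.
Import Order.TTheory GRing.Theory Num.Theory.
Import numFieldNormedType.Exports.
Local Open Scope classical_set_scope.
Local Open Scope ring_scope.

Section Defs.
Variables (R : realType) (n : nat).
Notation vec := 'rV[R]_n.

Definition dotv (x y : vec) : R := \sum_(i < n) x 0 i * y 0 i.
Definition norm2 (x : vec) : R := Num.sqrt (dotv x x).

Definition convex_fun (f : vec -> R) : Prop :=
  forall x y (t : R), 0 <= t <= 1 ->
    f (t *: x + (1 - t) *: y) <= t * f x + (1 - t) * f y.

Definition grad (f : vec -> R) (x : vec) : vec :=
  \row_(i < n) ('d f x : vec -> R) (delta_mx 0 i).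

Definition diff_loclip_grad (f : vec -> R) : Prop :=
  (forall x, differentiable f x) /\
  forall x, exists2 delta : R, 0 < delta & exists L : R, forall y z,
    norm2 (y - x) < delta -> norm2 (z - x) < delta ->
    norm2 (grad f y - grad f z) <= L * norm2 (y - z).

Definition subdiff (h : vec -> R) (x : vec) : set vec :=
  [set z | forall y, h x + dotv z (y - x) <= h y].

Definition conj_fun (h : vec -> R) (z : vec) : \bar R :=
  ereal_sup [set ((dotv x z - h x)%:E) | x in [set: vec]].

Definition indic (C : set vec) (x : vec) : \bar R :=
  if `[< C x >] then 0%E else +oo%E.

Definition is_prox (phi : vec -> \bar R) (y p : vec) : Prop :=
  forall x, (phi p + (2^-1 * norm2 (p - y) ^+ 2)%:E <=
             phi x + (2^-1 * norm2 (x - y) ^+ 2)%:E)%E.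

Definition Omega (g : vec -> R) : set vec := [set x | g x != 0].

Definition Fobj (f g h1 h2 : vec -> R) (C : set vec) (x : vec) : \bar R :=
  if `[< Omega g x /\ C x >] then ((f x ^+ 2 / g x + h1 x - h2 x)%:E)
  else +oo%E.

Definition domF (f g h1 h2 : vec -> R) (C : set vec) : set vec :=
  [set x | Fobj f g h1 h2 C x < +oo]%E.

Definition Hfun (f g h1 h2 : vec -> R) (C : set vec) (x z : vec) (c : R)
  : \bar R :=
  ((2 * c * f x)%:E + indic C x + (- c ^+ 2 * g x + h1 x)%:E
   + conj_fun h2 z - (dotv x z)%:E)%E.

Definition trial_point (f g h1 : vec -> R) (C : set vec)
  (xk zk : vec) (ck alpha : R) (xh : vec) : Prop :=
  is_prox (fun u => ((2 * alpha * ck * f u)%:E + indic C u)%E)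
    (xk - alpha *: (grad h1 xk - ck ^+ 2 *: grad g xk - zk)) xh.

Definition accepted (f g h1 h2 : vec -> R) (C : set vec) (sigma : R)
  (xk zk xh : vec) : Prop :=
  Omega g xh /\
  (Hfun f g h1 h2 C xh zk (f xh / g xh) + (sigma / 2 * norm2 (xh - xk) ^+ 2)%:E
     <= Fobj f g h1 h2 C xk)%E.

(* At iteration k,
   alpha_tilde_k in [alo, ahi] is chosen; the line search tries
   alpha = alpha_tilde_k * r^i, i = 0, 1, ..., each time computing some
   element of the prox; trials i < j fail, trial j succeeds and gives x^{k+1}. *)
Definition generated_by_alg1 (f g h1 h2 : vec -> R) (C : set vec)
  (alo ahi sigma r : R) (x0 : vec)
  (x z : nat -> vec) (c : nat -> R) : Prop :=
  x 0%N = x0 /\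
  forall k : nat,
    c k = f (x k) / g (x k) /\
    subdiff h2 (x k) (z k) /\
    exists2 at_ : R, alo <= at_ <= ahi &
    exists j : nat,
      (forall i : nat, (i < j)%N -> exists xh : vec,
          trial_point f g h1 C (x k) (z k) (c k) (at_ * r ^+ i) xh /\
          ~ accepted f g h1 h2 C sigma (x k) (z k) xh) /\
      trial_point f g h1 C (x k) (z k) (c k) (at_ * r ^+ j) (x k.+1) /\
      accepted f g h1 h2 C sigma (x k) (z k) (x k.+1).

End Defs.

From Pilot Require Import Defs.
From HB Require Import structures.
From mathcomp Require Import all_boot all_order all_algebra.
From mathcomp Require Import all_classical all_reals all_analysis.
From mathcomp Require Import ring lra.
Set Implicit Arguments. Unset Strict Implicit. Unset Printing Implicit Defensive.
Import Order.TTheory GRing.Theory Num.Theory.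
Import numFieldNormedType.Exports.
Local Open Scope classical_set_scope.
Local Open Scope ring_scope.

(* With c = f(x)/g(x) one has 2 c f(x) - c^2 g(x) = f(x)^2/g(x), and the
   Fenchel-Young inequality gives h2^*(z) - <x,z> >= -h2(x); hence
   H(x,z,c) >= F(x) and the acceptance test yields the sufficient descent
   F(x^{k+1}) + sigma/2 ||x^{k+1} - x^k||^2 <= F(x^k).
   The iterates therefore stay in the compact sublevel set X0, where F is
   bounded below, so F(x^k) decreases to a limit and the squared steps,
   dominated by F(x^k) - F(x^{k+1}), tend to 0.  A convex function is bounded
   on bounded sets, so z^k (a subgradient of h2 at a bounded point) and the
   numerators f(x^k) are bounded, while g, continuous and nonzero on the
   compact X0, is bounded away from 0 there; this bounds c_k. *)

Section RowNorms.
Variables (R : realType) (n : nat).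
Implicit Types (x : 'rV[R]_n) (M : R).

Lemma mx_coord_le_norm x i : `|x 0 i| <= `|x|.
Proof.
rewrite [leRHS](_ : _ = mx_norm x) // mx_normrE.
exact: (le_bigmax _ (fun ij : 'I_1 * 'I_n => `|x ij.1 ij.2|) (0, i)).
Qed.

Lemma mx_norm_le_coord x M : 0 <= M -> (forall i, `|x 0 i| <= M) -> `|x| <= M.
Proof.
move=> M_ge0 xM; rewrite [leLHS](_ : _ = mx_norm x) // mx_normrE.
by apply: bigmax_le => // -[i j] _; rewrite (ord1 i).
Qed.

Lemma norm_delta_le1 j : `|'e_j : 'rV[R]_n| <= 1.
Proof.
apply: mx_norm_le_coord => // i; rewrite mxE.
by case: (_ && _); rewrite ?normr1 ?normr0.
Qed.

Lemma dotv_delta (z : 'rV[R]_n) (s : R) j : dotv z (s *: 'e_j) = s * z 0 j.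
Proof.
rewrite /dotv (bigD1 j) //= big1 ?addr0 => [|i ij].
  by rewrite !mxE !eqxx mulr1 mulrC.
by rewrite !mxE (negbTE ij) andbF mulr0 mulr0.
Qed.

Lemma norm2_le_mx_norm x : norm2 x <= Num.sqrt n%:R * `|x|.
Proof.
rewrite -[`|x|]normr_id -sqrtr_sqr -sqrtrM //; apply: ler_wsqrtr.
rewrite /dotv mulr_natl -[n in _ *+ n]card_ord -sumr_const.
apply: ler_sum => i _.
apply: le_trans (ler_norm _) _; rewrite normrM expr2.
by apply: ler_pM => //; exact: mx_coord_le_norm.
Qed.

End RowNorms.

Section ConvexBounds.
Variables (R : realType) (n : nat) (h : 'rV[R]_n -> R).
Hypothesis h_convex : convex_fun h.

Lemma convex_fun_line_le (e : 'rV[R]_n) (K t : R) : 0 < K -> `|t| <= K ->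
  h (t *: e) <= `|h (K *: e)| + `|h (- K *: e)|.
Proof.
move=> K_gt0 tK; set l := (t + K) / (2 * K).
have l01 : 0 <= l <= 1.
  move: tK; rewrite ler_norml => /andP[tl tr].
  by rewrite divr_ge0 ?ler_pdivrMr /=; lra.
have -> : t *: e = l *: (K *: e) + (1 - l) *: (- K *: e).
  rewrite !scalerA -scalerDl; congr (_ *: e).
  by rewrite /l; field; rewrite lt0r_neq0 //; lra.
apply: le_trans (h_convex _ _ l01) _; move: l01 => /andP[l0 l1].
have := ler_norm (h (K *: e)); have := ler_norm (h (- K *: e)).
have := normr_ge0 (h (K *: e)); have := normr_ge0 (h (- K *: e)).
nra.
Qed.

Lemma convex_fun_mean_le (B : R) m (w : 'I_m -> 'rV[R]_n) : (0 < m)%N ->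
  (forall i, h (w i) <= B) -> h (m%:R^-1 *: \sum_i w i) <= B.
Proof.
elim: m w => [//|[|m] IH] w _ wB.
  by rewrite big_ord1 invr1 scale1r.
set t : R := m.+1%:R / m.+2%:R.
have t01 : 0 <= t <= 1.
  by rewrite divr_ge0 //= ler_pdivrMr ?ltr0n // mul1r ler_nat.
have -> : m.+2%:R^-1 *: \sum_(i < m.+2) w i =
    t *: (m.+1%:R^-1 *: \sum_(i < m.+1) w (widen_ord (leqnSn _) i)) +
    (1 - t) *: w ord_max.
  have m_ge0 := ler0n R m.
  rewrite big_ord_recr /= scalerDr !scalerA; congr (_ *: _ + _ *: _);
  by rewrite /t; field; rewrite ?lt0r_neq0 //; lra.
apply: le_trans (h_convex _ _ t01) _; move: t01 => /andP[t0 t1].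
have := IH (fun i => w (widen_ord (leqnSn _) i)) erefl (fun i => wB _).
have := wB ord_max; nra.
Qed.

Lemma convex_fun_bounded_above (M : R) :
  exists B, forall x, `|x| <= M -> h x <= B.
Proof.
wlog M_gt0 : M / 0 < M => [ub|].
  have M1_gt0 : 0 < Num.max M 1 by rewrite lt_max ltr01 orbT.
  have [B hB] := ub _ M1_gt0.
  by exists B => x xM; apply: hB; rewrite le_max xM.
pose K := n%:R * M.
pose S : R := \sum_(j < n) (`|h (K *: 'e_j)| + `|h (- K *: 'e_j)|).
have S_ge0 : 0 <= S by apply: sumr_ge0 => j _; rewrite addr_ge0.
exists (`|h 0| + S) => x xM.
have [n0|n_gt0] := posnP n.
  have -> : x = 0 by apply/rowP => i; move: (ltn_ord i); rewrite {2}n0.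
  by apply: le_trans (ler_norm _) _; rewrite lerDl.
(* x is the mean of the points (n x_i) e_i, which lie on the coordinate axes
   within distance K of 0. *)
have -> : x = n%:R^-1 *: \sum_(i < n) (n%:R * x 0 i) *: 'e_i.
  rewrite {1}[x]row_sum_delta scaler_sumr; apply: eq_bigr => i _.
  by rewrite scalerA mulrA mulVf ?mul1r // pnatr_eq0 -lt0n.
apply: convex_fun_mean_le => // i.
apply: le_trans (convex_fun_line_le _ (K := K) _ _) _.
- by rewrite mulr_gt0 ?ltr0n.
- rewrite normrM ger0_norm // ler_pM2l ?ltr0n //.
  exact: le_trans (mx_coord_le_norm x i) xM.
rewrite /S (bigD1 i) //= addrCA lerDl addr_ge0 //.
by apply: sumr_ge0 => j _; rewrite addr_ge0.
Qed.

Lemma convex_fun_bounded_below (M : R) :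
  exists B, forall x, `|x| <= M -> B <= h x.
Proof.
have [B hB] := convex_fun_bounded_above M.
exists (2 * h 0 - B) => x xM.
have half01 : 0 <= (2^-1 : R) <= 1 by apply/andP; split; lra.
have := h_convex x (- x) half01.
have -> : 2^-1 *: x + (1 - 2^-1) *: - x = 0 :> 'rV[R]_n.
  by rewrite scalerN -scalerBl (_ : _ - _ = 0) ?scale0r //; field.
have := hB (- x); rewrite normrN => /(_ xM); lra.
Qed.

Lemma subdiff_bounded (M : R) :
  exists Z, forall x z, `|x| <= M -> subdiff h x z -> `|z| <= Z.
Proof.
have [U hU] := convex_fun_bounded_above (M + 1).
have [L hL] := convex_fun_bounded_below M.
exists (U - L) => x z xM zx.
have hx_le : h x <= U by apply: hU; apply: le_trans xM _; rewrite lerDl.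
have hx_ge := hL x xM.
apply: mx_norm_le_coord => [|j]; first by lra.
have coord_le s : `|s| <= 1 -> s * z 0 j <= U - L.
  move=> s1; have := zx (x + s *: 'e_j).
  rewrite addrAC subrr add0r dotv_delta.
  suff : h (x + s *: 'e_j) <= U by lra.
  apply: hU; apply: le_trans (ler_normD _ _) _; apply: lerD => //.
  by rewrite normrZ -[1]mulr1 ler_pM ?norm_delta_le1.
have := coord_le 1; have := coord_le (-1); rewrite normrN normr1 !mulN1r mul1r.
move=> /(_ (lexx _)) zl /(_ (lexx _)) zr.
by rewrite ler_norml zr andbT lerNl.
Qed.

End ConvexBounds.

Section CompactBounds.
Variable R : realType.

Lemma compact_norm_le (V : normedModType R) (A : set V) :
  compact A -> exists M, forall x, A x -> `|x| <= M.
Proof.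
move=> /compact_bounded[M [M_real AM]]; exists (`|M| + 1).
by apply: AM; apply: le_lt_trans (real_ler_norm M_real) _; rewrite ltrDl.
Qed.

Variables (T : topologicalType) (g : T -> R) (A : set T).
Hypotheses (g_cont : continuous g) (A_compact : compact A).

Let gA_compact : compact (g @` A).
Proof. exact: continuous_compact (continuous_subspaceT g_cont) A_compact. Qed.

Lemma continuous_compact_bounded : exists K, forall x, A x -> `|g x| <= K.
Proof.
have [K gAK] := compact_norm_le gA_compact.
by exists K => x Ax; apply: gAK; exists x.
Qed.

Lemma continuous_compact_away0 : (forall x, A x -> g x != 0) ->
  exists2 e, 0 < e & forall x, A x -> e <= `|g x|.
Proof.
move=> g_neq0.
have : nbhs (0 : R) (~` (g @` A)).
  apply: open_nbhs_nbhs; split.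
    exact/closed_openC/(compact_closed (@Rhausdorff R)).
  by move=> [y Ay gy0]; move: (g_neq0 y Ay); rewrite gy0 eqxx.
move=> /nbhs_ballP[e e_gt0 eA]; exists e => // x Ax.
rewrite leNgt; apply/negP => gx_lt; apply: (eA (g x)); last by exists x.
by rewrite /ball /= sub0r normrN.
Qed.

End CompactBounds.

Section SufficientDescent.
Variables (R : realType) (a d : nat -> R) (s B : R).
Hypotheses (s_gt0 : 0 < s) (a_ge : forall k, B <= a k).
Hypothesis descent : forall k, a k.+1 + s * d k ^+ 2 <= a k.

Lemma descent_nonincreasing : {homo a : p q / (p <= q)%N >-> q <= p}.
Proof.
apply/nonincreasing_seqP => k; apply: le_trans (descent k); rewrite lerDl.
by rewrite mulr_ge0 ?sqr_ge0 ?ltW.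
Qed.

Lemma descent_cvg : a @ \oo --> inf (range a).
Proof.
apply: nonincreasing_cvgn descent_nonincreasing _.
by exists B => _ [k _ <-].
Qed.

Lemma descent_step_cvg0 : (forall k, 0 <= d k) -> d @ \oo --> 0.
Proof.
move=> d_ge0; apply/cvgr0Pnorm_lt => e e_gt0.
have gap0 : (fun k => a k - a k.+1) @ \oo --> 0.
  have a_shift : (fun k => a k.+1) @ \oo --> inf (range a).
    by rewrite cvg_shiftS; exact: descent_cvg.
  by rewrite -(subrr (inf (range a))); exact: cvgB descent_cvg a_shift.
have se2_gt0 : 0 < s * e ^+ 2 by rewrite mulr_gt0 ?exprn_gt0.
near=> k.
have : `|a k - a k.+1| < s * e ^+ 2.
  by near: k; exact: (cvgr0Pnorm_lt _).1 gap0 _ se2_gt0.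
move=> /(le_lt_trans (ler_norm _)) gap; rewrite ger0_norm //.
have : s * d k ^+ 2 < s * e ^+ 2 by have := descent k; lra.
rewrite ltr_pM2l // => dk2_lt; have := d_ge0 k; nra.
Unshelve. all: by end_near.
Qed.

End SufficientDescent.

Lemma fenchel_young (R : realType) n (h : 'rV[R]_n -> R) x z :
  ((dotv x z - h x)%:E <= conj_fun h z)%E.
Proof. by apply: ereal_sup_ubound; exists x. Qed.

Section Descent.
Variables (R : realType) (n : nat) (f g h1 h2 : 'rV[R]_n -> R).
Variable C : set 'rV[R]_n.

Definition Fval (u : 'rV[R]_n) : R := f u ^+ 2 / g u + h1 u - h2 u.

Lemma Fobj_feasible u : Omega g u /\ C u -> Fobj f g h1 h2 C u = (Fval u)%:E.
Proof. by move=> u_feas; rewrite /Fobj asboolT. Qed.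

Lemma domF_feasible u : domF f g h1 h2 C u -> Omega g u /\ C u.
Proof.
rewrite /domF /Fobj /=; case: (pselect (Omega g u /\ C u)) => // u_infeas.
by rewrite asboolF // ltxx.
Qed.

Lemma Hfun_notC u z c : ~ C u -> Hfun f g h1 h2 C u z c = +oo%E.
Proof.
move=> u_notC; have conj_ninfty : conj_fun h2 z != -oo%E.
  by apply: contraTneq (fenchel_young h2 u z) => ->; rewrite leeNy_eq.
by rewrite /Hfun /Defs.indic asboolF // addey // !addye.
Qed.

Lemma Fval_le_Hfun u z : Omega g u -> C u ->
  ((Fval u)%:E <= Hfun f g h1 h2 C u z (f u / g u))%E.
Proof.
move=> gu_neq0 Cu; rewrite /Hfun /Defs.indic asboolT //.
have := fenchel_young h2 u z; case: (conj_fun h2 z) => [r | | ] //=.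
  rewrite adde0 -!EFinD !lee_fin /Fval => r_ge.
  have -> : 2 * (f u / g u) * f u = f u ^+ 2 / g u + (f u / g u) ^+ 2 * g u.
    by field.
  lra.
by move=> _; rewrite addey ?addye ?leey // adde0 -EFinD.
Qed.

Lemma accepted_descent sigma xk zk xn : Omega g xk /\ C xk ->
  accepted f g h1 h2 C sigma xk zk xn ->
  [/\ Omega g xn, C xn & Fval xn + sigma / 2 * norm2 (xn - xk) ^+ 2 <= Fval xk].
Proof.
move=> xk_feas [xn_Omega]; rewrite Fobj_feasible // => acc.
have xn_C : C xn.
  apply: contrapT => xn_notC; move: acc.
  by rewrite Hfun_notC // addye // leye_eq.
split => //; rewrite -lee_fin EFinD; apply: le_trans acc.
by rewrite leeD2r // Fval_le_Hfun.
Qed.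

Lemma Fval_bounded_below (A : set 'rV[R]_n) : (forall u, 0 <= g u) ->
  continuous h1 -> convex_fun h2 -> compact A ->
  exists B, forall u, A u -> B <= Fval u.
Proof.
move=> g_ge0 h1_cont h2_convex A_compact.
have [M AM] := compact_norm_le A_compact.
have [K h1K] := continuous_compact_bounded h1_cont A_compact.
have [U h2U] := convex_fun_bounded_above h2_convex M.
exists (- K - U) => u Au; rewrite /Fval.
have ratio_ge0 : 0 <= f u ^+ 2 / g u by rewrite divr_ge0 ?sqr_ge0.
have := h1K u Au; rewrite ler_norml => /andP[h1_ge _].
have := h2U u (AM u Au); lra.
Qed.

End Descent.

Section Iterates.
Variables (R : realType) (n : nat) (f g h1 h2 : 'rV[R]_n -> R).
Variables (C : set 'rV[R]_n) (alo ahi sigma r : R) (x0 : 'rV[R]_n).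
Variables (x z : nat -> 'rV[R]_n) (c : nat -> R).
Hypotheses (sigma_gt0 : 0 < sigma) (x0_dom : domF f g h1 h2 C x0).
Hypothesis alg : generated_by_alg1 f g h1 h2 C alo ahi sigma r x0 x z c.

Let accepted_step k : accepted f g h1 h2 C sigma (x k) (z k) (x k.+1).
Proof. by have [_ [_ [alpha _ [j [_ [_ acc]]]]]] := alg.2 k. Qed.

Lemma iterates_feasible k : Omega g (x k) /\ C (x k).
Proof.
elim: k => [|k xk_feas]; first by rewrite alg.1; exact: domF_feasible x0_dom.
by have [] := accepted_descent xk_feas (accepted_step k).
Qed.

Lemma iterates_descent k :
  Fval f g h1 h2 (x k.+1) + sigma / 2 * norm2 (x k.+1 - x k) ^+ 2
    <= Fval f g h1 h2 (x k).
Proof.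
by have [] := accepted_descent (iterates_feasible k) (accepted_step k).
Qed.

Let X0 := [set u | domF f g h1 h2 C u /\
  (Fobj f g h1 h2 C u <= Fobj f g h1 h2 C x0)%E].

Lemma iterates_sublevel k : X0 (x k).
Proof.
have [xk_feas x0_feas] := (iterates_feasible k, iterates_feasible 0).
rewrite /X0 /domF /= -alg.1 !Fobj_feasible // lee_fin; split; first exact: ltry.
have half_sigma_gt0 : 0 < sigma / 2 by rewrite divr_gt0.
exact: (descent_nonincreasing (a := fun k => Fval f g h1 h2 (x k))
  (d := fun k => norm2 (x k.+1 - x k)) half_sigma_gt0 iterates_descent).
Qed.

Hypothesis X0_compact : compact X0.

Lemma iterates_norm_bounded : exists M, forall k, `|x k| <= M.
Proof.
have [M X0M] := compact_norm_le X0_compact.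
by exists M => k; apply/X0M/iterates_sublevel.
Qed.

Lemma iterates_subgradient_bounded : convex_fun h2 ->
  exists M, forall k, `|z k| <= M.
Proof.
move=> h2_convex; have [M xM] := iterates_norm_bounded.
have [Mz zM] := subdiff_bounded h2_convex M.
by exists Mz => k; apply: zM (xM k) _; have [_ []] := alg.2 k.
Qed.

Lemma iterates_ratio_bounded : (forall u, 0 <= f u) -> (forall u, 0 <= g u) ->
  convex_fun f -> continuous g -> exists M, forall k, `|c k| <= M.
Proof.
move=> f_ge0 g_ge0 f_convex g_cont.
have X0_g_neq0 u : X0 u -> g u != 0 by case=> /domF_feasible[].
have [e e_gt0 X0_ge] := continuous_compact_away0 g_cont X0_compact X0_g_neq0.
have [M xM] := iterates_norm_bounded.
have [U fU] := convex_fun_bounded_above f_convex M.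
exists (U / e) => k; have [-> _] := alg.2 k.
have e_le : e <= g (x k).
  by rewrite -[g _]ger0_norm ?X0_ge //; exact: iterates_sublevel.
have gk_gt0 : 0 < g (x k) by apply: lt_le_trans e_le.
rewrite ger0_norm ?divr_ge0 // ler_pdivrMr // mulrAC ler_pdivlMr //.
by apply: ler_pM => //; [exact: ltW | exact: fU].
Qed.

Lemma iterates_Fval_bounded_below : (forall u, 0 <= g u) ->
  continuous h1 -> convex_fun h2 ->
  exists B, forall k, B <= Fval f g h1 h2 (x k).
Proof.
move=> g_ge0 h1_cont h2_convex.
have [B FB] := Fval_bounded_below f g_ge0 h1_cont h2_convex X0_compact.
by exists B => k; apply/FB/iterates_sublevel.
Qed.

End Iterates.
Theorem corollary4p1 (R : realType) (n : nat)
  (f g h1 h2 : 'rV[R]_n -> R) (C : set 'rV[R]_n)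
  (alo ahi sigma r : R) (x0 : 'rV[R]_n)
  (x z : nat -> 'rV[R]_n) (c : nat -> R) :
  (forall u, 0 <= f u) -> (forall u, 0 <= g u) ->
  closed C -> convex_set C ->
  (Omega g `&` C !=set0) ->
  convex_fun f ->
  diff_loclip_grad g ->
  diff_loclip_grad h1 ->
  convex_fun h2 ->
  0 < alo -> alo < ahi -> 0 < sigma -> 0 < r -> r < 1 ->
  domF f g h1 h2 C x0 ->
  compact [set u | domF f g h1 h2 C u /\
                   (Fobj f g h1 h2 C u <= Fobj f g h1 h2 C x0)%E] ->
  generated_by_alg1 f g h1 h2 C alo ahi sigma r x0 x z c ->
  (exists M : R, forall k,
      norm2 (x k) <= M /\ norm2 (z k) <= M /\ `|c k| <= M) /\
  (exists l : R, (fun k => Fobj f g h1 h2 C (x k)) @ \oo --> l%:E) /\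
  ((fun k => norm2 (x k.+1 - x k)) @ \oo --> (0 : R)).
Proof.
(* Closedness and convexity of C and the step-size parameters only ensure that
   the prox step is well defined and the line search terminates; the
   conclusions hold for any sequence generated by the algorithm. *)
move=> f_ge0 g_ge0 _ _ _ f_convex [g_diff _] [h1_diff _] h2_convex _ _ sigma_gt0
  _ _ x0_dom X0_compact alg.
have g_cont : continuous g := fun u => differentiable_continuous (g_diff u).
have h1_cont : continuous h1 := fun u => differentiable_continuous (h1_diff u).
have [Mx xM] := iterates_norm_bounded sigma_gt0 x0_dom alg X0_compact.
have [Mz zM] :=
  iterates_subgradient_bounded sigma_gt0 x0_dom alg X0_compact h2_convex.
have [Mc cM] := iterates_ratio_bounded sigma_gt0 x0_dom alg X0_compact
  f_ge0 g_ge0 f_convex g_cont.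
have [B FB] := iterates_Fval_bounded_below sigma_gt0 x0_dom alg X0_compact
  g_ge0 h1_cont h2_convex.
have descent := iterates_descent x0_dom alg.
have half_sigma_gt0 : 0 < sigma / 2 by rewrite divr_gt0.
split; [|split].
- exists (Num.max (Num.sqrt n%:R * Num.max Mx Mz) Mc) => k.
  rewrite !le_max cM !orbT; split; [|split => //]; apply/orP; left.
  + by apply: le_trans (norm2_le_mx_norm _) _; rewrite ler_wpM2l // le_max xM.
  + apply: le_trans (norm2_le_mx_norm _) _.
    by rewrite ler_wpM2l // le_max zM orbT.
- exists (inf (range (fun k => Fval f g h1 h2 (x k)))).
  rewrite (_ : (fun k => _) = (fun k => (Fval f g h1 h2 (x k))%:E)).
    apply: cvg_EFin; first by near=> k.
    exact: descent_cvg half_sigma_gt0 FB descent.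
  apply: funext => k; rewrite Fobj_feasible //.
  exact: iterates_feasible x0_dom alg _.
- apply: descent_step_cvg0 half_sigma_gt0 FB descent _ => k.
  exact: sqrtr_ge0.
Unshelve. all: by end_near.
Qed.
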